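(* Let $(a_n)$ be positive reals and $(b_n)$ nonzero complex numbers. Suppose there are constants $0<\nu_0<\nu_1<\nu_2<1$ with $$a_{n+1}/a_n<\nu_0\quad\text{and}\quad \nu_1<|b_{n+1}/b_n|<\nu_2\quad\text{for all }n\in\mathbb{N}.$$ Then $\pi\in\ell^\infty$ and $\Phi$ spatially exponentially decays.
   Context: $\pi_n:=2\prod_{m\ge1,\,m\ne n}\frac{1+a_m/a_n}{1-a_m/a_n}$. $\Phi=[\phi_{ij}]_{i,j\ge1}$ with $\phi_{ij}:=\frac{|b_i/b_j|}{1+a_i/a_j}$. $\Phi$ spatially exponentially decays if there are $C>0$, $\mu\in(0,1)$ with $\phi_{ij}\le C\mu^{|i-j|}$ for all $i,j\in\mathbb{N}$. *)

From Stdlib Require Import Reals Lra Arith.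
From Coquelicot Require Export Coquelicot.
Open Scope R_scope.

(* Indices: the paper's sequences are indexed by m >= 1; we index by nat
   starting at 0 (a pure relabelling m |-> m-1). *)

Fixpoint prod_upto (f : nat -> R) (N : nat) : R :=
  match N with
  | O => f O
  | S k => prod_upto f k * f (S k)
  end.

Definition pi_factor (a : nat -> R) (n m : nat) : R :=
  if Nat.eqb m n then 1 else (1 + a m / a n) / (1 - a m / a n).

Definition pi_partial (a : nat -> R) (n N : nat) : R :=
  2 * prod_upto (pi_factor a n) N.

Definition pi_seq (a : nat -> R) (n : nat) : R :=
  real (Lim_seq (pi_partial a n)).

Definition phi (a : nat -> R) (b : nat -> C) (i j : nat) : R :=
  Cmod (Cdiv (b i) (b j)) / (1 + a i / a j).

Definition nat_absdiff (i j : nat) : nat := Nat.max i j - Nat.min i j.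

Definition spatially_exp_decays (Phi : nat -> nat -> R) : Prop :=
  exists C mu : R, 0 < C /\ 0 < mu < 1 /\
    forall i j : nat, Phi i j <= C * mu ^ (nat_absdiff i j).

Definition pi_in_linfty (a : nat -> R) : Prop :=
  (forall n, ex_finite_lim_seq (pi_partial a n)) /\
  exists M : R, forall n, Rabs (pi_seq a n) <= M.

(** The factor of index [m] in [pi_n] is [(1 + y)/(1 - y)] up to sign, with
    [y = a_j / a_i <= nu0^|n-m|] for [{i, j} = {n, m}], [i < j]; since
    [(1 + y)/(1 - y) <= exp (2 y / (1 - nu0))], the partial products are bounded
    by [2 exp (2/(1-nu0) * sum_m nu0^|n-m|)], uniformly in [n].  The factors with
    [m > n] are at least [1], so the partial products are eventually monotone,
    hence convergent.  For [Phi], below the diagonal [phi_ij <= |b_i/b_j| <= nu2^(i-j)];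
    above it [phi_ij <= |b_i/b_j| * a_j/a_i <= (nu0/nu1)^(j-i)]. *)

From Stdlib Require Import Reals Lra Lia Psatz.
From Coquelicot Require Import Coquelicot.
Open Scope R_scope.

Lemma nat_absdiff_l i j : (j <= i)%nat -> nat_absdiff i j = (i - j)%nat.
Proof. unfold nat_absdiff; lia. Qed.

Lemma nat_absdiff_r i j : (i <= j)%nat -> nat_absdiff i j = (j - i)%nat.
Proof. unfold nat_absdiff; lia. Qed.

Lemma pow_le_one q k : 0 <= q <= 1 -> q ^ k <= 1.
Proof. intros Hq; rewrite <- (pow1 k); apply pow_incr; lra. Qed.

Lemma pow_le_base q k : 0 <= q <= 1 -> (0 < k)%nat -> q ^ k <= q.
Proof.
  intros Hq Hk; destruct k as [|k]; [lia|]; simpl.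
  pose proof (pow_le_one q k Hq); nra.
Qed.

Lemma exp_le_compat x y : x <= y -> exp x <= exp y.
Proof. intros [H|H]; [left; apply exp_increasing | right; f_equal]; assumption. Qed.

Lemma pow_step_le (u : nat -> R) q : 0 <= q ->
  (forall n, u (S n) <= q * u n) -> forall m k, u (m + k)%nat <= q ^ k * u m.
Proof.
  intros Hq Hu m k; induction k as [|k IH].
  - rewrite Nat.add_0_r; simpl; lra.
  - rewrite Nat.add_succ_r; simpl; specialize (Hu (m + k)%nat); nra.
Qed.

Lemma pow_step_ge (u : nat -> R) q : 0 <= q ->
  (forall n, q * u n <= u (S n)) -> forall m k, q ^ k * u m <= u (m + k)%nat.
Proof.
  intros Hq Hu m k; induction k as [|k IH].
  - rewrite Nat.add_0_r; simpl; lra.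
  - rewrite Nat.add_succ_r; simpl; specialize (Hu (m + k)%nat); nra.
Qed.

(* Truncated subtraction: for [N <= n] the last exponent is [1], for [N >= n]
   the first is [0], so this covers both sides of the diagonal at once. *)
Lemma sum_pow_nat_absdiff_le q n N : 0 < q < 1 ->
  sum_f_R0 (fun m => q ^ nat_absdiff n m) N
  <= (q ^ (n - N) + q - q ^ (N - n + 1)) / (1 - q).
Proof.
  intros Hq; induction N as [|N IH]; simpl sum_f_R0.
  - rewrite nat_absdiff_l, Nat.sub_0_r by lia; simpl (0 - n + 1)%nat.
    pose proof (pow_lt q n (proj1 Hq)).
    apply Rle_div_r; [lra|]; simpl; nra.
  - destruct (Nat.le_gt_cases (S N) n) as [HN|HN].
    + rewrite nat_absdiff_l by lia.
      replace (n - N)%nat with (S (n - S N)) in IH by lia.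
      replace (N - n + 1)%nat with 1%nat in IH by lia.
      replace (S N - n + 1)%nat with 1%nat by lia.
      simpl in IH |- *; set (p := q ^ (n - S N)) in *.
      assert ((p + q - q * 1) / (1 - q) = (q * p + q - q * 1) / (1 - q) + p)
        by (field; lra).
      lra.
    + rewrite nat_absdiff_r by lia.
      replace (n - N)%nat with 0%nat in IH by lia.
      replace (n - S N)%nat with 0%nat by lia.
      replace (N - n + 1)%nat with (S N - n)%nat in IH by lia.
      replace (S N - n + 1)%nat with (S (S N - n)) by lia.
      change (q ^ S (S N - n)) with (q * q ^ (S N - n)); simpl (q ^ 0) in IH |- *.
      set (p := q ^ (S N - n)) in *.
      assert ((1 + q - q * p) / (1 - q) = (1 + q - p) / (1 - q) + p) by (field; lra).
      lra.
Qed.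

Lemma sum_pow_nat_absdiff_bounded q n N : 0 < q < 1 ->
  sum_f_R0 (fun m => q ^ nat_absdiff n m) N <= (1 + q) / (1 - q).
Proof.
  intros Hq; eapply Rle_trans; [apply sum_pow_nat_absdiff_le; exact Hq|].
  pose proof (pow_le_one q (n - N) ltac:(lra)).
  pose proof (pow_le q (N - n + 1) ltac:(lra)).
  unfold Rdiv; apply Rmult_le_compat_r; [left; apply Rinv_0_lt_compat|]; lra.
Qed.

Lemma Rabs_prod_upto_le_exp (f g : nat -> R) N :
  (forall m, Rabs (f m) <= exp (g m)) ->
  Rabs (prod_upto f N) <= exp (sum_f_R0 g N).
Proof.
  intros Hfg; induction N as [|N IH]; simpl; [apply Hfg|].
  rewrite Rabs_mult, exp_plus.
  apply Rmult_le_compat; [apply Rabs_pos | apply Rabs_pos | exact IH | apply Hfg].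
Qed.

Lemma cayley_bounds q y t : 0 <= y <= t -> t <= q < 1 ->
  1 <= (1 + y) / (1 - y) <= exp (2 / (1 - q) * t).
Proof.
  intros Hy Ht.
  replace ((1 + y) / (1 - y)) with (1 + 2 * y * / (1 - y)) by (field; lra).
  assert (0 < / (1 - y)) by (apply Rinv_0_lt_compat; lra).
  split; [nra|].
  eapply Rle_trans; [|apply exp_ineq1_le]; apply Rplus_le_compat_l.
  replace (2 / (1 - q) * t) with (2 * t * / (1 - q)) by (field; lra).
  apply Rmult_le_compat; [lra | lra | lra | apply Rinv_le_contravar; lra].
Qed.

Lemma ex_finite_lim_seq_bounded_expanding (v f : nat -> R) n M :
  (forall N, v (S N) = v N * f (S N)) ->
  (forall m, (n < m)%nat -> 1 <= f m) ->
  (forall N, Rabs (v N) <= M) ->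
  ex_finite_lim_seq v.
Proof.
  intros Hv Hf HM.
  set (w := fun k => v (k + n)%nat).
  assert (Hw : forall k, w (S k) = w k * f (S (k + n))) by (intros k; apply Hv).
  assert (Hf' : forall k, 1 <= f (S (k + n))) by (intros k; apply Hf; lia).
  assert (HwM : forall k, - M <= w k <= M) by (intros k; apply Rabs_le_between, HM).
  assert (Hlim : ex_finite_lim_seq w).
  { destruct (Rle_lt_dec 0 (w 0%nat)) as [H0|H0].
    - assert (Hpos : forall k, 0 <= w k).
      { induction k as [|k IH]; [exact H0|]; rewrite Hw; specialize (Hf' k); nra. }
      apply (ex_finite_lim_seq_incr w M); [|intros k; apply HwM].
      intros k; rewrite Hw; specialize (Hf' k); specialize (Hpos k); nra.
    - assert (Hneg : forall k, w k <= 0).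
      { induction k as [|k IH]; [lra|]; rewrite Hw; specialize (Hf' k); nra. }
      apply (ex_finite_lim_seq_decr w (- M)); [|intros k; apply HwM].
      intros k; rewrite Hw; specialize (Hf' k); specialize (Hneg k); nra. }
  destruct Hlim as [l Hl]; exists l; apply (is_lim_seq_incr_n _ n); exact Hl.
Qed.

Lemma Rabs_Lim_seq_le (u : nat -> R) M :
  ex_finite_lim_seq u -> (forall N, Rabs (u N) <= M) ->
  Rabs (real (Lim_seq u)) <= M.
Proof.
  intros [l Hl] HM; rewrite (is_lim_seq_unique _ _ Hl).
  exact (is_lim_seq_le _ _ _ _ HM (is_lim_seq_abs _ _ Hl) (is_lim_seq_const M)).
Qed.

Section PiBounded.

Variables (a : nat -> R) (nu0 : R).
Hypotheses (ha : forall n, 0 < a n) (hnu0 : 0 < nu0 < 1)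
  (hA : forall n, a (S n) < nu0 * a n).

Lemma a_ratio_cayley_bounds i j : (i < j)%nat ->
  0 < a j / a i /\
  1 <= (1 + a j / a i) / (1 - a j / a i)
    <= exp (2 / (1 - nu0) * nu0 ^ nat_absdiff i j).
Proof.
  intros Hij; rewrite nat_absdiff_r by lia.
  pose proof (pow_step_le a nu0 ltac:(lra) (fun n => Rlt_le _ _ (hA n)) i (j - i))
    as Hdecay.
  replace (i + (j - i))%nat with j in Hdecay by lia.
  assert (Hy : 0 < a j / a i) by (apply Rdiv_lt_0_compat; apply ha).
  split; [exact Hy|]; apply cayley_bounds.
  - split; [lra|]; apply Rle_div_l; [apply ha | exact Hdecay].
  - split; [apply pow_le_base; [lra | lia] | lra].
Qed.

Lemma pi_factor_bounds n m :
  Rabs (pi_factor a n m) <= exp (2 / (1 - nu0) * nu0 ^ nat_absdiff n m) /\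
  ((n < m)%nat -> 1 <= pi_factor a n m).
Proof.
  unfold pi_factor; destruct (Nat.lt_total m n) as [Hmn|[->|Hnm]].
  - destruct (Nat.eqb_spec m n) as [|_]; [lia|]; split; [|lia].
    destruct (a_ratio_cayley_bounds m n Hmn) as [Hy Hb].
    replace (nat_absdiff n m) with (nat_absdiff m n) by (unfold nat_absdiff; lia).
    replace (a m / a n) with (/ (a n / a m)) by apply Rinv_div.
    set (y := a n / a m) in *.
    assert (y <> 1) by (intros E; rewrite E in Hb; unfold Rdiv in Hb;
      rewrite Rminus_diag, Rinv_0, Rmult_0_r in Hb; lra).
    replace ((1 + / y) / (1 - / y)) with (- ((1 + y) / (1 - y)))
      by (field; repeat split; lra).
    rewrite Rabs_Ropp, Rabs_pos_eq; lra.
  - rewrite Nat.eqb_refl, Rabs_R1; split; [|lia].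
    replace (nat_absdiff n n) with 0%nat by (unfold nat_absdiff; lia); simpl.
    pose proof (exp_ineq1_le (2 / (1 - nu0) * 1)).
    assert (0 < 2 / (1 - nu0)) by (apply Rdiv_lt_0_compat; lra); lra.
  - destruct (Nat.eqb_spec m n) as [|_]; [lia|].
    destruct (a_ratio_cayley_bounds n m Hnm) as [_ Hb].
    rewrite Rabs_pos_eq; lra.
Qed.

Definition pi_partial_bound : R := 2 * exp (2 / (1 - nu0) * ((1 + nu0) / (1 - nu0))).

Lemma pi_partial_bounded n N : Rabs (pi_partial a n N) <= pi_partial_bound.
Proof.
  unfold pi_partial, pi_partial_bound.
  rewrite Rabs_mult, (Rabs_pos_eq 2) by lra; apply Rmult_le_compat_l; [lra|].
  eapply Rle_trans.
  { apply (Rabs_prod_upto_le_exp _ (fun m => nu0 ^ nat_absdiff n m * (2 / (1 - nu0)))).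
    intros m; rewrite Rmult_comm; apply pi_factor_bounds. }
  apply exp_le_compat; rewrite <- scal_sum.
  apply Rmult_le_compat_l; [left; apply Rdiv_lt_0_compat; lra|].
  apply sum_pow_nat_absdiff_bounded; exact hnu0.
Qed.

Lemma pi_in_linfty_of_decay : pi_in_linfty a.
Proof.
  assert (Hcv : forall n, ex_finite_lim_seq (pi_partial a n)).
  { intros n; apply (ex_finite_lim_seq_bounded_expanding _ (pi_factor a n) n
      pi_partial_bound).
    - intros N; unfold pi_partial; simpl; ring.
    - intros m Hm; apply pi_factor_bounds, Hm.
    - apply pi_partial_bounded. }
  split; [exact Hcv|]; exists pi_partial_bound; intros n.
  apply Rabs_Lim_seq_le; [apply Hcv | apply pi_partial_bounded].
Qed.

End PiBounded.

Section PhiDecay.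

Variables (a : nat -> R) (b : nat -> C) (nu0 nu1 nu2 : R).
Hypotheses (ha : forall n, 0 < a n) (hb : forall n, b n <> 0%C)
  (hnu : 0 < nu0 /\ nu0 < nu1 /\ nu1 < nu2 /\ nu2 < 1)
  (hA : forall n, a (S n) < nu0 * a n)
  (hB : forall n, nu1 * Cmod (b n) < Cmod (b (S n)) < nu2 * Cmod (b n)).

Lemma Cmod_b_pos n : 0 < Cmod (b n).
Proof. apply Cmod_gt_0, hb. Qed.

Lemma phi_le_Cmod_ratio i j : phi a b i j <= Cmod (b i) / Cmod (b j).
Proof.
  unfold phi; rewrite Cmod_div by apply hb.
  pose proof (Cmod_b_pos i); pose proof (Cmod_b_pos j).
  assert (0 < a i / a j) by (apply Rdiv_lt_0_compat; apply ha).
  apply Rle_div_l; [lra|].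
  assert (0 < Cmod (b i) / Cmod (b j)) by (apply Rdiv_lt_0_compat; lra); nra.
Qed.

Lemma phi_le_Cmod_ratio_mul i j :
  phi a b i j <= Cmod (b i) / Cmod (b j) * (a j / a i).
Proof.
  unfold phi; rewrite Cmod_div by apply hb.
  pose proof (Cmod_b_pos i); pose proof (Cmod_b_pos j); pose proof (ha i); pose proof (ha j).
  replace (Cmod (b i) / Cmod (b j) / (1 + a i / a j))
    with (Cmod (b i) / Cmod (b j) * (a j / (a j + a i))) by (field; lra).
  apply Rmult_le_compat_l; [left; apply Rdiv_lt_0_compat; lra|].
  unfold Rdiv; apply Rmult_le_compat_l; [lra|]; apply Rinv_le_contravar; lra.
Qed.

Lemma phi_le_pow_below j k : phi a b (j + k) j <= nu2 ^ k.
Proof.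
  eapply Rle_trans; [apply phi_le_Cmod_ratio|].
  apply Rle_div_l; [apply Cmod_b_pos|].
  apply (pow_step_le (fun n => Cmod (b n))); [lra|].
  intros n; left; apply hB.
Qed.

Lemma phi_le_pow_above i k : phi a b i (i + k) <= (nu0 / nu1) ^ k.
Proof.
  eapply Rle_trans; [apply phi_le_Cmod_ratio_mul|].
  pose proof (Cmod_b_pos i); pose proof (Cmod_b_pos (i + k)); pose proof (ha i).
  pose proof (pow_lt nu1 k ltac:(lra)).
  assert (HB : nu1 ^ k * Cmod (b i) <= Cmod (b (i + k)%nat)).
  { apply (pow_step_ge (fun n => Cmod (b n))); [lra|]; intros n; left; apply hB. }
  assert (HA : a (i + k)%nat <= nu0 ^ k * a i).
  { apply pow_step_le; [lra|]; intros n; left; apply hA. }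
  unfold Rdiv; rewrite Rpow_mult_distr, pow_inv, (Rmult_comm (nu0 ^ k)).
  apply Rmult_le_compat.
  - left; apply Rmult_lt_0_compat; [|apply Rinv_0_lt_compat]; lra.
  - left; apply Rmult_lt_0_compat; [apply ha | apply Rinv_0_lt_compat; lra].
  - apply Rle_div_l; [lra|].
    apply (Rmult_le_reg_l (nu1 ^ k)); [lra|].
    rewrite <- Rmult_assoc, Rinv_r, Rmult_1_l by lra; exact HB.
  - apply Rle_div_l; [lra | exact HA].
Qed.

Lemma phi_le_pow_nat_absdiff i j :
  phi a b i j <= Rmax nu2 (nu0 / nu1) ^ nat_absdiff i j.
Proof.
  assert (Hq : 0 < nu0 / nu1) by (apply Rdiv_lt_0_compat; lra).
  destruct (Nat.le_gt_cases j i) as [Hji|Hij].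
  - replace i with (j + (i - j))%nat by lia; rewrite nat_absdiff_l by lia.
    replace (j + (i - j) - j)%nat with (i - j)%nat by lia.
    eapply Rle_trans; [apply phi_le_pow_below|].
    apply pow_incr; split; [lra | apply Rmax_l].
  - replace j with (i + (j - i))%nat by lia; rewrite nat_absdiff_r by lia.
    replace (i + (j - i) - i)%nat with (j - i)%nat by lia.
    eapply Rle_trans; [apply phi_le_pow_above|].
    apply pow_incr; split; [lra | apply Rmax_r].
Qed.

Lemma phi_spatially_exp_decays : spatially_exp_decays (phi a b).
Proof.
  exists 1, (Rmax nu2 (nu0 / nu1)); split; [lra|]; split.
  - split; [apply Rlt_le_trans with nu2; [lra | apply Rmax_l]|].
    apply Rmax_lub_lt; [lra|].
    apply Rlt_div_l; lra.
  - intros i j; rewrite Rmult_1_l; apply phi_le_pow_nat_absdiff.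
Qed.

End PhiDecay.

Theorem theorem5 (a : nat -> R) (b : nat -> C) (nu0 nu1 nu2 : R)
  (ha : forall n, 0 < a n) (hb : forall n, b n <> 0%C)
  (hnu : 0 < nu0 /\ nu0 < nu1 /\ nu1 < nu2 /\ nu2 < 1)
  (hA : forall n, a (S n) / a n < nu0)
  (hB : forall n, nu1 < Cmod (Cdiv (b (S n)) (b n)) < nu2) :
  pi_in_linfty a /\ spatially_exp_decays (phi a b).
Proof.
  assert (hA' : forall n, a (S n) < nu0 * a n).
  { intros n; apply Rlt_div_l; [apply ha | apply hA]. }
  assert (hB' : forall n, nu1 * Cmod (b n) < Cmod (b (S n)) < nu2 * Cmod (b n)).
  { intros n; pose proof (proj1 (Cmod_gt_0 (b n)) (hb n)) as Hpos.
    destruct (hB n) as [H1 H2]; rewrite Cmod_div in H1, H2 by apply hb.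
    apply (Rlt_div_r _ _ _ Hpos) in H1; apply (Rlt_div_l _ _ _ Hpos) in H2.
    split; assumption. }
  split.
  - apply (pi_in_linfty_of_decay a nu0 ha); [lra | exact hA'].
  - exact (phi_spatially_exp_decays a b nu0 nu1 nu2 ha hb hnu hA' hB').
Qed.
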